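(* For every $J\subseteq\{0,1,\dots,n-1\}$, $$\varphi(X_J)=2^{\#J}\sum_{F\in\mathcal{F}_n,\ F\subseteq J\cup(J+1)}P_F.$$
   Context: $B_n$: signed permutations $w=w_1\dots w_n$, values ordered $\cdots<-2<-1<1<2<\cdots$, $w_0=0$; $\mathrm{Des}(w)=\{i\in\{0,\dots,n-1\}:w_i>w_{i+1}\}$; $X_J=\sum_{\mathrm{Des}(w)\subseteq J}w\in\mathbb{Q}B_n$. $\varphi:\mathbb{Q}B_n\to\mathbb{Q}\mathfrak{S}_n$ is the linear extension of $w\mapsto|w_1|\dots|w_n|$. For $u\in\mathfrak{S}_n$, $\mathrm{Peak}(u)=\{i\in[n-1]:u_{i-1}<u_i>u_{i+1}\}$ with $u_0=0$; $\mathcal{F}_n$ is the set of subsets of $[n-1]$ with no two consecutive integers; $P_F=\sum_{\mathrm{Peak}(u)=F}u$. $J+1=\{j+1:j\in J\}$. *)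

From HB Require Import structures.
From mathcomp Require Import all_boot all_order all_algebra all_fingroup.
Set Implicit Arguments. Unset Strict Implicit. Unset Printing Implicit Defensive.
Import GRing.Theory Num.Theory.
Local Open Scope ring_scope.

(* A signed permutation of [n]: underlying permutation s of 'I_n together with
   signs e; the one-line notation is w_{i+1} = (-1)^{e i} (s i + 1) for i : 'I_n. *)
Definition bn (n : nat) : finType := ('S_n * {ffun 'I_n -> bool})%type.

Definition bseq n (w : bn n) : seq int :=
  [seq (if w.2 i then - (((w.1 i : nat).+1)%:Z) else ((w.1 i : nat).+1)%:Z)
  | i <- enum 'I_n].

(* w_k for k = 0..n, with w_0 = 0 *)
Definition bval n (w : bn n) (k : nat) : int := nth 0 (0 :: bseq w) k.

Definition Des n (w : bn n) : {set 'I_n} :=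
  [set i : 'I_n | bval w (val i) > bval w (val i).+1].

(* group algebras as coefficient functions *)
Definition QB n := {ffun bn n -> rat}.
Definition QS n := {ffun 'S_n -> rat}.

Definition XJ n (J : {set 'I_n}) : QB n :=
  [ffun w => if Des w \subset J then 1 else 0].

(* linear extension of w |-> |w_1|...|w_n| *)
Definition phi n (x : QB n) : QS n :=
  [ffun u : 'S_n => \sum_(w : bn n | w.1 == u) x w].

(* u_k for k = 0..n, with u_0 = 0, u_{i+1} = u(i) + 1 for i : 'I_n *)
Definition sval n (u : 'S_n) (k : nat) : nat :=
  nth 0%N (0%N :: [seq (u i : nat).+1 | i <- enum 'I_n]) k.

(* Peak(u) ⊆ [n-1] = {1,...,n-1}, viewed inside 'I_n *)
Definition Peak n (u : 'S_n) : {set 'I_n} :=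
  [set i : 'I_n | [&& (0 < val i)%N,
                      (sval u (val i).-1 < sval u (val i))%N &
                      (sval u (val i).+1 < sval u (val i))%N]].

Definition isFn n (F : {set 'I_n}) : bool :=
  [forall i : 'I_n, (i \in F) ==> (0 < val i)%N] &&
  [forall i : 'I_n, forall j : 'I_n, ((i \in F) && (j \in F)) ==> (val j != (val i).+1)].

Definition PF n (F : {set 'I_n}) : QS n :=
  [ffun u => if Peak u == F then 1 else 0].

(* J ∪ (J+1), intersected with {0,...,n-1} (harmless: F ⊆ [n-1]) *)
Definition JJ1 n (J : {set 'I_n}) : {set 'I_n} :=
  [set i : 'I_n | (i \in J) || [exists j in J, val i == (val j).+1]].

(* Fix the absolute values u of a signed permutation and vary only the signs e.
   Whether i is a descent of (u, e) is decided by a single sign: that of w_{i+1}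
   if |w_i| < |w_{i+1}|, and that of w_i otherwise.  So Des(u, e) ⊆ J imposes one
   sign constraint per i ∉ J; two of them fall on the same sign exactly when i and
   i+1 are both outside J and i+1 is a peak of u, and then they contradict each
   other.  Hence there are 2^#J admissible sign vectors if Peak(u) ⊆ J ∪ (J+1),
   and none otherwise. *)
From Pilot Require Import Defs.
From HB Require Import structures.
From mathcomp Require Import all_boot all_order all_algebra all_fingroup zify.
Import GRing.Theory Num.Theory.
Set Implicit Arguments. Unset Strict Implicit.

Lemma card_ffun_prescribed (I I' T : finType) (S : {set I}) (t : I -> I') (v : I -> T) :
  {in S &, injective t} ->
  #|[set e : {ffun I' -> T} | [forall i in S, e (t i) == v i]]| =
  (#|T| ^ (#|I'| - #|S|))%N.
Proof.
move=> t_inj.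
pose F x := [pred y : T | [forall i in S, (t i == x) ==> (y == v i)]].
have famF : [set e : {ffun I' -> T} | [forall i in S, e (t i) == v i]] =i family F.
  move=> e; rewrite inE; apply/forall_inP/familyP => /= He.
    move=> x; rewrite inE; apply/forall_inP => i iS; apply/implyP => /eqP <-.
    exact: He.
  by move=> i iS; have /forall_inP/(_ i iS) := He (t i); rewrite eqxx.
have cardF x : #|F x| = if x \in t @: S then 1%N else #|T|.
  case: imsetP => [[i iS ->]|not_img].
    rewrite -(card1 (v i)); apply: eq_card => y; rewrite !inE.
    apply/forall_inP/eqP => [Hy|->]; first by have := Hy i iS; rewrite eqxx => /eqP.
    by move=> j jS; apply/implyP => /eqP /t_inj-> //.
  apply: eq_card => y; rewrite !inE; apply/forall_inP => i iS.
  by apply/implyP => /eqP tix; case: not_img; exists i.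
rewrite (eq_card famF) card_family foldrE big_map big_enum /= (eq_bigr _ (fun x _ => cardF x)).
rewrite (bigID (mem (t @: S))) /= big1 => [|x ->] //.
rewrite mul1n (eq_bigr (fun=> #|T|)) => [|x /negbTE->] //.
rewrite prod_nat_const -(card_in_imset t_inj) (cardsCs (t @: S)) subKn ?max_card //.
by congr (_ ^ _); apply: eq_card => x; rewrite inE.
Qed.

Definition prev_ord n (i : 'I_n) : 'I_n :=
  Ordinal (leq_ltn_trans (leq_pred i) (ltn_ord i)).

Lemma prev_ordK n (i : 'I_n) : (0 < i)%N -> (prev_ord i).+1 = i.
Proof. by case: i => [[]]. Qed.

Section SignChoices.

Variables (n : nat) (u : 'S_n).

Definition ascent (i : 'I_n) : bool := (Defs.sval u i < Defs.sval u i.+1)%N.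

(* The position k whose sign [e k] (that of w_{k+1}) decides whether [i] is a
   descent of [(u, e)]. *)
Definition des_pos (i : 'I_n) : 'I_n := if ascent i then i else prev_ord i.

Lemma svalS (i : 'I_n) : Defs.sval u i.+1 = (u i).+1.
Proof.
by rewrite /Defs.sval /= (nth_map i) ?size_enum_ord ?ltn_ord // nth_ord_enum.
Qed.

Lemma sval_prev (i : 'I_n) : (0 < i)%N -> Defs.sval u i = (u (prev_ord i)).+1.
Proof. by move/prev_ordK <-; rewrite svalS. Qed.

Lemma bvalS (e : {ffun 'I_n -> bool}) (i : 'I_n) :
  bval ((u, e) : bn n) i.+1 = (if e i then - (u i).+1%:Z else (u i).+1%:Z)%R.
Proof.
by rewrite /bval /bseq /= (nth_map i) ?size_enum_ord ?ltn_ord // nth_ord_enum.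
Qed.

Lemma ascent0 (i : 'I_n) : val i = 0%N -> ascent i.
Proof. by rewrite /ascent svalS => ->. Qed.

Lemma not_ascent_descent (i : 'I_n) :
  ~~ ascent i -> (0 < i)%N /\ (Defs.sval u i.+1 < Defs.sval u i)%N.
Proof.
rewrite /ascent -leqNgt => le_next.
have i_gt0 : (0 < i)%N.
  by case: (posnP i) => // /ascent0; rewrite /ascent ltnNge le_next.
split=> //; rewrite ltn_neqAle le_next andbT svalS sval_prev // eqSS.
apply/negP => /eqP/val_inj/perm_inj/(congr1 val) /=.
by move: i_gt0; lia.
Qed.

Lemma mem_Des (e : {ffun 'I_n -> bool}) (i : 'I_n) :
  (i \in Des ((u, e) : bn n)) = (e (des_pos i) != ~~ ascent i).
Proof.
rewrite inE /des_pos /=; case: (posnP i) => [i0|i_gt0].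
  by rewrite ascent0 // bvalS i0 /bval /=; case: (e i) => /=; lia.
rewrite -[in bval _ i](prev_ordK i_gt0) !bvalS.
case asc_i: (ascent i); move: asc_i.
  by rewrite /ascent svalS sval_prev //; case: (e i); case: (e (prev_ord i)) => /=; lia.
move/negbT/not_ascent_descent => [_]; rewrite svalS sval_prev //.
by case: (e i); case: (e (prev_ord i)) => /=; lia.
Qed.

Lemma Des_subsetE (e : {ffun 'I_n -> bool}) (J : {set 'I_n}) :
  (Des ((u, e) : bn n) \subset J) =
  [forall i in ~: J, e (des_pos i) == ~~ ascent i].
Proof.
apply/subsetP/forall_inP => [sub i|fixed i].
  by rewrite inE => iJ; apply/negPn; rewrite -mem_Des; apply: contra iJ => /sub.
by rewrite mem_Des; apply: contraR => iJ; rewrite fixed ?inE.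
Qed.

Lemma PeakE (i : 'I_n) :
  (i \in Peak u) = [&& (0 < i)%N, ascent (prev_ord i) & ~~ ascent i].
Proof.
rewrite inE; apply/and3P/and3P => [[i_gt0 up down]|[i_gt0 up /not_ascent_descent[_ down]]].
  by split; rewrite /ascent ?prev_ordK // -leqNgt ltnW.
by split=> //; move: up; rewrite /ascent prev_ordK.
Qed.

Lemma isFn_Peak : isFn (Peak u).
Proof.
apply/andP; split; apply/forallP => i; first by rewrite PeakE; apply/implyP => /andP[].
apply/forallP => j; apply/implyP; rewrite !PeakE => /andP[/and3P[_ _ desc_i] /and3P[_ asc_j _]].
apply: contraNneq desc_i => j_succ.
by have <- : prev_ord j = i by apply: val_inj; rewrite /= j_succ.
Qed.

Lemma des_pos_inj (J : {set 'I_n}) :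
  Peak u \subset JJ1 J -> {in ~: J &, injective des_pos}.
Proof.
move=> /subsetP peakJ.
suff asym i j : i \notin J -> j \notin J -> ascent i -> ~~ ascent j ->
    des_pos i = des_pos j -> i = j.
  move=> i j; rewrite !inE => iJ jJ.
  case asc_i: (ascent i); case asc_j: (ascent j) => eq_pos.
  - by move: eq_pos; rewrite /des_pos asc_i asc_j.
  - by apply: asym; rewrite ?asc_j.
  - by symmetry; apply: asym; rewrite ?asc_i.
  have [[i_gt0 _] [j_gt0 _]] := (not_ascent_descent (negbT asc_i), not_ascent_descent (negbT asc_j)).
  apply: val_inj; move: eq_pos i_gt0 j_gt0; rewrite /des_pos asc_i asc_j.
  by move=> /(congr1 val) /=; lia.
rewrite /des_pos => iJ jJ asc_i desc_j; rewrite asc_i (negbTE desc_j) => i_prev.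
have [j_gt0 _] := not_ascent_descent desc_j.
have /peakJ : j \in Peak u by rewrite PeakE j_gt0 -i_prev asc_i.
rewrite inE (negbTE jJ) => /existsP[k /andP[kJ /eqP jk]].
have ki : k = i by apply: val_inj; rewrite i_prev /=; move: jk => /= ->.
by rewrite -ki kJ in iJ.
Qed.

(* At a peak k ∉ J ∪ (J+1), the constraints at k-1 and k both fall on the sign
   at position k-1, asking for opposite values. *)
Lemma Peak_sub_JJ1 (e : {ffun 'I_n -> bool}) (J : {set 'I_n}) :
  Des ((u, e) : bn n) \subset J -> Peak u \subset JJ1 J.
Proof.
rewrite Des_subsetE => /forall_inP fixed; apply/subsetP => k peak_k.
move: (peak_k); rewrite PeakE => /and3P[k_gt0 asc_prev desc_k].
apply/negPn/negP; rewrite inE negb_or => /andP[kJ no_pred].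
have prevJ : prev_ord k \in ~: J.
  rewrite inE; apply: contra no_pred => prevJ.
  by apply/exists_inP; exists (prev_ord k); rewrite //= prednK.
have := fixed _ prevJ; have := fixed k; rewrite inE => /(_ kJ).
by rewrite /des_pos asc_prev (negbTE desc_k) => /eqP ->.
Qed.

Lemma card_Des_subset (J : {set 'I_n}) :
  #|[set e : {ffun 'I_n -> bool} | Des ((u, e) : bn n) \subset J]| =
  if Peak u \subset JJ1 J then (2 ^ #|J|)%N else 0%N.
Proof.
case: ifP => [peakJ|no_peakJ].
  under eq_finset => e do rewrite Des_subsetE.
  rewrite card_ffun_prescribed; last exact: des_pos_inj.
  congr (_ ^ _); first exact: card_bool.
  by rewrite [RHS]cardsCs.
apply: eq_card0 => e; rewrite !inE.
by apply: contraFF no_peakJ; apply: Peak_sub_JJ1.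
Qed.

End SignChoices.

Local Open Scope ring_scope.

Lemma phi_XJE n (J : {set 'I_n}) (u : 'S_n) :
  phi (XJ J) u = #|[set e : {ffun 'I_n -> bool} | Des ((u, e) : bn n) \subset J]|%:R.
Proof.
have -> : phi (XJ J) u = \sum_(s | s == u) \sum_e XJ J ((s, e) : bn n).
  by rewrite ffunE pair_big_dep; apply: eq_big => -[s e]; rewrite ?andbT.
rewrite big_pred1_eq -sum1_card natr_sum [RHS]big_mkcond; apply: eq_bigr => e _.
by rewrite !ffunE inE; case: ifP.
Qed.

Lemma sum_PFE n (K : {set 'I_n}) (u : 'S_n) :
  (\sum_(F | isFn F && (F \subset K)) PF F) u = (Peak u \subset K)%:R.
Proof.
rewrite sum_ffunE; case: (boolP (Peak u \subset K)) => peakK.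
  rewrite (bigD1 (Peak u)) /=; last by rewrite isFn_Peak peakK.
  rewrite big1 => [|F /andP[_]]; first by rewrite ffunE eqxx addr0.
  by rewrite ffunE eq_sym => /negbTE->.
by apply: big1 => F /andP[_ FK]; rewrite ffunE; case: eqP => // peakF; rewrite peakF FK in peakK.
Qed.

Theorem proposition3p3 (n : nat) (J : {set 'I_n}) :
  phi (XJ J) =
  [ffun u : 'S_n =>
     2 ^+ #|J| * (\sum_(F : {set 'I_n} | isFn F && (F \subset JJ1 J)) PF F) u].
Proof.
apply/ffunP => u; rewrite phi_XJE ffunE card_Des_subset sum_PFE.
by case: ifP => _; rewrite ?mulr1 ?mulr0 ?natrX.
Qed.
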